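(* Let $X$ be a uniform space equipped with a uniformly continuous and expansive action of a group $\Gamma$, and let $f \colon X \to X$ be a uniformly continuous and $\Gamma$-equivariant map. Let $Y$ be a compact subset of $X$. Suppose that there exists a net $(Z_i)_{i \in I}$ of $\Gamma$-invariant subsets of $X$ which converges to $Y$ in the Hausdorff-Bourbaki topology on $\mathcal{P}(X)$, such that for every $i \in I$ one has $f(Z_i) \subset Z_i$ and the restriction map $f\vert_{Z_i} \colon Z_i \to Z_i$ is surjunctive. Then $Y$ is $\Gamma$-invariant, $f(Y) \subset Y$, and the restriction map $f\vert_Y \colon Y \to Y$ is surjunctive.
   Context: A map $g \colon S \to S$ from a set to itself is surjunctive if it is surjective or not injective. For a binary relation $V \subset X \times X$ and $A \subset X$, $V[A] = \{x \in X : (x,a) \in V \text{ for some } a \in A\}$. An action of $\Gamma$ on a uniform space $X$ is uniformly continuous if each map $x \mapsto \gamma x$ is uniformly continuous; it is expansive if there is an entourage $W_0$ of $X$ such that for any two distinct $x,y \in X$ there is $\gamma \in \Gamma$ with $(\gamma x,\gamma y) \notin W_0$. The Hausdorff-Bourbaki uniform structure on the set $\mathcal{P}(X)$ of all subsets of $X$ is the uniform structure having as a base the sets $\widehat{V} = \{(A,B) \in \mathcal{P}(X)\times\mathcal{P}(X) : B \subset V[A] \text{ and } A \subset V[B]\}$, $V$ an entourage of $X$; the Hausdorff-Bourbaki topology is its associated topology. *)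

From HB Require Import structures.
From mathcomp Require Import all_boot all_classical all_reals topology.
Set Implicit Arguments. Unset Strict Implicit. Unset Printing Implicit Defensive.
Local Open Scope classical_set_scope.

Definition is_group (G : Type) (mul : G -> G -> G) (one : G) (inv : G -> G) :=
  [/\ forall a b c, mul a (mul b c) = mul (mul a b) c,
      forall a, mul one a = a, forall a, mul a one = a,
      forall a, mul (inv a) a = one & forall a, mul a (inv a) = one].

Definition is_action (G X : Type) (mul : G -> G -> G) (one : G)
  (act : G -> X -> X) :=
  (forall x, act one x = x) /\ (forall g h x, act (mul g h) x = act g (act h x)).

Definition rel_image (X : Type) (V : set (X * X)) (A : set X) : set X :=
  [set x | exists2 a, A a & V (x, a)].

Definition hb_entourage (X : Type) (V : set (X * X)) : set (set X * set X) :=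
  [set AB | AB.2 `<=` rel_image V AB.1 /\ AB.1 `<=` rel_image V AB.2].

Definition directed_set (I : Type) (le : I -> I -> Prop) :=
  [/\ inhabited I, (forall i, le i i), (forall i j k, le i j -> le j k -> le i k)
    & forall i j, exists k, le i k /\ le j k].

(* The net Z converges to Y in the Hausdorff-Bourbaki topology on P(X):
   every basic neighbourhood {B | (Y,B) in \hat V} of Y eventually contains Z i. *)
Definition hb_net_converges (X : uniformType) (I : Type) (le : I -> I -> Prop)
  (Z : I -> set X) (Y : set X) :=
  forall V, entourage V ->
    exists i0, forall i, le i0 i -> hb_entourage V (Y, Z i).

Definition uc_action (G : Type) (X : uniformType) (act : G -> X -> X) :=
  forall g, unif_continuous (act g).

Definition expansive_action (G : Type) (X : uniformType) (act : G -> X -> X) :=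
  exists2 W0, entourage W0 &
    forall x y : X, x <> y -> exists g, ~ W0 (act g x, act g y).

Definition equivariant (G X : Type) (act : G -> X -> X) (f : X -> X) :=
  forall g x, f (act g x) = act g (f x).

Definition gamma_invariant (G X : Type) (act : G -> X -> X) (Z : set X) :=
  forall g x, Z x -> Z (act g x).

Definition maps_into (X : Type) (f : X -> X) (Z : set X) := forall x, Z x -> Z (f x).

Definition surjunctive_on (X : Type) (f : X -> X) (Z : set X) :=
  (forall z, Z z -> exists2 w, Z w & f w = z) \/
  ~ (forall a b, Z a -> Z b -> f a = f b -> a = b).

From HB Require Import structures.
From mathcomp Require Import all_boot all_classical all_reals topology.
Local Open Scope classical_set_scope.

(* Expansiveness makes X Hausdorff, and a compact Y then is closed, so the net
   transfers every uniformly continuous self-map preserving all Z i to Y.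
   On the compact set Y an injective uniformly continuous f is uniformly
   injective; by expansiveness and equivariance this forces f to be injective
   on every Gamma-invariant Z i close enough to Y, so f is surjective on it.
   Every point of Y is therefore a limit of points of f(Y), which is compact,
   hence closed. *)

Lemma unif_continuous_ent {U V : uniformType} {h : U -> V} {E : set (V * V)} :
  unif_continuous h -> entourage E ->
  exists2 D, entourage D & forall a b, D (a, b) -> E (h a, h b).
Proof.
by move=> hu entE; exists ((fun xy => (h xy.1, h xy.2)) @^-1` E); [exact: hu|].
Qed.

Lemma unif_continuous_continuous {U V : uniformType} (h : U -> V) :
  unif_continuous h -> continuous h.
Proof.
move=> hu x B /nbhsP [E entE sEB].
have [D entD DE] := unif_continuous_ent hu entE.
apply/nbhsP; exists D => // y /xsectionP Dxy; apply: sEB; apply/xsectionP.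
exact: DE.
Qed.

Lemma closure_entourage {U : uniformType} (A : set U) (x : U) :
  (forall E, entourage E -> exists2 a, A a & E (x, a)) -> closure A x.
Proof.
move=> Aclose B /nbhsP [E entE sEB]; have [a Aa Exa] := Aclose E entE.
by exists a; split => //; apply: sEB; apply/xsectionP.
Qed.

Lemma hausdorff_entourage_eq {U : uniformType} {p q : U} : hausdorff_space U ->
  (forall A, entourage A -> A (p, q)) -> p = q.
Proof. by move=> hU pq; apply: hU; rewrite -closeEnbhs entourage_close. Qed.

Lemma compact_entourage_cluster {T : topologicalType} {M : uniformType}
    {K : set T} {S : set (M * M) -> set T} :
  compact K -> (forall E, S E `<=` K) ->
  (forall E E', E `<=` E' -> S E `<=` S E') ->
  (forall E, entourage E -> S E !=set0) ->
  exists2 p, K p & forall E A, entourage E -> nbhs p A -> S E `&` A !=set0.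
Proof.
move=> cK SK Smono Sne.
have FS : Filter (filter_from entourage S).
  apply: filter_from_filter; first by exists setT; exact: entourageT.
  move=> E E' entE entE'; exists (E `&` E'); first exact: filterI.
  by move=> x Sx; split; apply: Smono Sx => ? [].
have [p [Kp clp]] : K `&` cluster (filter_from entourage S) !=set0.
  apply: cK; first exact: filter_from_proper.
  by exists setT; [exact: entourageT|exact: SK].
by exists p => // E A entE nA; apply: clp => //; exists E.
Qed.

Definition unif_injective_on {U V : uniformType} (f : U -> V) (Y : set U) :=
  forall W, entourage W -> exists2 E, entourage E &
    forall a b, Y a -> Y b -> E (f a, f b) -> W (a, b).

Lemma unif_injective_compact {U V : uniformType} {f : U -> V} {Y : set U} :
  hausdorff_space V -> compact Y -> unif_continuous f ->
  (forall a b, Y a -> Y b -> f a = f b -> a = b) -> unif_injective_on f Y.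
Proof.
move=> hV cY fu finj W entW; apply: contrapT => noE.
pose S E := [set ab : U * U | Y ab.1 /\ Y ab.2 /\ E (f ab.1, f ab.2) /\ ~ W ab].
have Sne E : entourage E -> S E !=set0.
  move=> entE; apply: contrapT => S0; apply: noE; exists E => // a b Ya Yb Eab.
  by apply: contrapT => nW; apply: S0; exists (a, b).
have SYY E : S E `<=` Y `*` Y by move=> ab [? []].
have Smono E E' : E `<=` E' -> S E `<=` S E'.
  by move=> sE ab [? [? [? ?]]]; do 3 split => //; exact: sE.
have [[p q] [/= Yp Yq] clpq] :=
  compact_entourage_cluster (compact_setX cY cY) SYY Smono Sne.
have nbhs_pair (E : set (U * U)) (x y : U) : entourage E ->
    nbhs (x, y) ([set z | E (z, x)] `*` [set z | E (y, z)]).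
  move=> entE; exists ([set z | E (z, x)], [set z | E (y, z)]) => //; split => /=.
    by apply: filterS (nbhs_entourage x (entourage_inv entE)) => z /xsectionP.
  by apply: filterS (nbhs_entourage y entE) => z /xsectionP.
have fpq : f p = f q.
  apply: (hausdorff_entourage_eq hV) => A entA.
  have entA1 := entourage_split_ent entA; have entA2 := entourage_split_ent entA1.
  have [D entD Df] := unif_continuous_ent fu entA2.
  have [[a b] [[_ [_ [Aab _]]] [/= Dap Dqb]]] :=
    clpq _ _ entA2 (nbhs_pair _ p q (entourage_inv entD)).
  apply: (entourage_split (f b) entA).
    exact: (entourage_split (f a) entA1 (Df _ _ Dap) Aab).
  exact: split_ent_subset entA1 _ (Df _ _ Dqb).
have epq : p = q := finj _ _ Yp Yq fpq; subst q.
have [[a b] [[_ [_ [_ nWab]]] [/= Wap Wpb]]] :=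
  clpq _ _ entourageT (nbhs_pair _ p p (entourage_split_ent entW)).
by apply: nWab; exact: (entourage_split p entW Wap Wpb).
Qed.

Section ExpansiveAction.
Context {G : Type} {X : uniformType} {act : G -> X -> X}.
Hypotheses (act_uc : uc_action act) (act_exp : expansive_action act).

Lemma expansive_hausdorff : hausdorff_space X.
Proof.
move=> p q cl; apply: contrapT => npq.
have [W0 entW0 sepW0] := act_exp; have [g ng] := sepW0 _ _ npq.
have [D entD DW0] := unif_continuous_ent (act_uc g) entW0.
by apply/ng/DW0; move: cl; rewrite -closeEnbhs entourage_close; apply.
Qed.

(* Two points of a Gamma-invariant set lying close to Y, and with the same image
   under f, stay close after every translation; expansiveness separates them. *)
Lemma expansive_injective_near {f : X -> X} {Y : set X} :
  unif_continuous f -> equivariant act f -> unif_injective_on f Y ->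
  exists2 V, entourage V & forall Z, gamma_invariant act Z ->
    Z `<=` rel_image V Y -> forall a b, Z a -> Z b -> f a = f b -> a = b.
Proof.
move=> fu feq funif; have [W0 entW0 sepW0] := act_exp.
have entW1 := entourage_split_ent entW0; have entW2 := entourage_split_ent entW1.
have [E entE EW2] := funif _ entW2.
have [D entD DE] := unif_continuous_ent fu (entourage_split_ent entE).
pose V' : set (X * X) := split_ent (split_ent W0) `&` D.
exists (V' `&` V'^-1)%relation; first by apply/entourage_invI/filterI.
move=> Z Zinv ZV a b Za Zb fab; apply: contrapT => nab.
have [g ng] := sepW0 _ _ nab; apply: ng.
have [y1 Yy1 [[W2a _] [_ D1]]] := ZV _ (Zinv g a Za).
have [y2 Yy2 [[_ D2] [W2b _]]] := ZV _ (Zinv g b Zb).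
have fg : f (act g a) = f (act g b) by rewrite !feq fab.
have Ey : E (f y1, f y2).
  apply: (entourage_split (f (act g a)) entE (DE _ _ D1)).
  by rewrite fg; exact: DE _ _ D2.
apply: (entourage_split y2 entW0); last exact: split_ent_subset W2b.
exact: (entourage_split y1 entW1 W2a (EW2 _ _ Yy1 Yy2 Ey)).
Qed.

End ExpansiveAction.

Definition hb_adherent {X : uniformType} {I : Type} (Z : I -> set X)
    (Y : set X) :=
  forall E, entourage E -> exists i, hb_entourage E (Y, Z i).

Lemma hb_net_converges_adherent {X : uniformType} {I : Type} {le : I -> I -> Prop}
    {Z : I -> set X} {Y : set X} :
  directed_set le -> hb_net_converges le Z Y -> hb_adherent Z Y.
Proof. by move=> [_ le_refl _ _] ZY E /ZY [i0 Hi0]; exists i0; exact: Hi0. Qed.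

Section HausdorffBourbakiLimit.
Context {X : uniformType} {I : Type} {Z : I -> set X} {Y : set X}.
Hypothesis Z_near_Y : hb_adherent Z Y.

Lemma hb_limit_maps_into {h : X -> X} : closed Y -> unif_continuous h ->
  (forall i, maps_into h (Z i)) -> maps_into h Y.
Proof.
move=> clY hu hZ y Yy; apply: clY; apply: closure_entourage => E entE.
have entE1 := entourage_split_ent entE.
have [D entD DE] := unif_continuous_ent hu entE1.
have [i [ZY YZ]] := Z_near_Y _ (filterI entD entE1).
have [z Zz [Dyz _]] := YZ _ Yy.
have [y' Yy' [_ E1]] := ZY _ (hZ _ _ Zz).
by exists y' => //; exact: (entourage_split (h z) entE (DE _ _ Dyz) E1).
Qed.

Lemma hb_limit_surjective {f : X -> X} : hausdorff_space X -> compact Y ->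
  unif_continuous f ->
  (exists2 V, entourage V & forall i, Z i `<=` rel_image V Y ->
     forall z, Z i z -> exists2 w, Z i w & f w = z) ->
  forall y, Y y -> exists2 w, Y w & f w = y.
Proof.
move=> hX cY fu [V entV Vsurj] y Yy.
have clfY : closed (f @` Y).
  apply: compact_closed hX _; apply: continuous_compact cY.
  exact/continuous_subspaceT/unif_continuous_continuous.
have [w Yw <-] : (f @` Y) y; last by exists w.
apply: clfY; apply: closure_entourage => E entE.
have entE1 := entourage_split_ent entE.
have [D entD DE] := unif_continuous_ent fu entE1.
have [i [ZY YZ]] := Z_near_Y _ (filterI entV (filterI entE1 entD)).
have ZVY : Z i `<=` rel_image V Y.
  by move=> z /ZY [y' Yy' [Vzy _]]; exists y'.
have [z Zz [_ [Eyz _]]] := YZ _ Yy.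
have [w Zw fwz] := Vsurj i ZVY z Zz.
have [y' Yy' [_ [_ Dwy]]] := ZY _ Zw.
exists (f y'); first by exists y'.
by apply: (entourage_split z entE Eyz); rewrite -fwz; exact: DE.
Qed.

End HausdorffBourbakiLimit.

Theorem theorem1p1 (G : Type) (mul : G -> G -> G) (one : G) (inv : G -> G)
  (X : uniformType) (act : G -> X -> X) (f : X -> X) (Y : set X)
  (I : Type) (le : I -> I -> Prop) (Z : I -> set X) :
  is_group mul one inv ->
  is_action mul one act ->
  uc_action act ->
  expansive_action act ->
  unif_continuous f ->
  equivariant act f ->
  compact Y ->
  directed_set le ->
  (forall i, gamma_invariant act (Z i)) ->
  hb_net_converges le Z Y ->
  (forall i, maps_into f (Z i)) ->
  (forall i, surjunctive_on f (Z i)) ->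
  [/\ gamma_invariant act Y, maps_into f Y & surjunctive_on f Y].
Proof.
move=> _ _ act_uc act_exp fu feq cY dle Zinv ZY Zf Zsj.
have hX := expansive_hausdorff act_uc act_exp.
have clY : closed Y := compact_closed hX cY.
have Z_near_Y := hb_net_converges_adherent dle ZY.
split.
- move=> g; apply: (hb_limit_maps_into Z_near_Y clY (act_uc g)) => i z.
  exact: Zinv.
- exact: (hb_limit_maps_into Z_near_Y clY fu Zf).
have [finj|] := pselect (forall a b, Y a -> Y b -> f a = f b -> a = b);
  last by right.
left; apply: (hb_limit_surjective Z_near_Y hX cY fu).
have [V entV Vinj] := expansive_injective_near act_exp fu feq
  (unif_injective_compact hX cY fu finj).
exists V => // i ZVY; case: (Zsj i) => [//|Znotinj].
by exfalso; apply: Znotinj; exact: Vinj.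
Qed.
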